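(* Let $V,W$ be real vector spaces and let $g:V\times W\to\mathbb{R}$ be given by $$g(v,w)=\sigma(v)+2p(v,w)-\mu(w)-2f(v)+2h(w)+r,$$ where $\sigma:V\to\mathbb{R}$ and $\mu:W\to\mathbb{R}$ are positive definite quadratic forms, $p:V\times W\to\mathbb{R}$ is bilinear, $f:V\to\mathbb{R}$ and $h:W\to\mathbb{R}$ are linear, and $r\in\mathbb{R}$. Assume: (i) there exists $c\ge0$ such that $c^2\sigma(v)\mu(w)\ge|p(v,w)|^2$ for all $v\in V$, $w\in W$; (ii) $\inf_{v\in V}g(v,0)>-\infty$ and $\sup_{w\in W}g(0,w)<+\infty$. Then (a) $\inf_{v\in V}\sup_{w\in W}g(v,w)=\sup_{w\in W}\inf_{v\in V}g(v,w)$; and (b) there exists $c_1\ge0$ such that $\inf_{v\in V}g(v,w)\ge-c_1(1+\mu(w))$ for all $w\in W$ and $\sup_{w\in W}g(v,w)\le c_1(1+\sigma(v))$ for all $v\in V$.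
   Context: A quadratic form on a real vector space $V$ is a function $\sigma(v)=b(v,v)$ with $b$ symmetric bilinear; it is positive definite if $\sigma(v)>0$ for all $v\ne0$. *)

From HB Require Import structures.
From mathcomp Require Import all_boot all_order all_algebra.
From mathcomp Require Import all_classical all_reals.
From mathcomp Require Import ereal.
Set Implicit Arguments. Unset Strict Implicit. Unset Printing Implicit Defensive.
Import Order.TTheory GRing.Theory Num.Theory.
Local Open Scope ring_scope.

Definition is_linear_functional (R : realType) (V : lmodType R) (f : V -> R) :=
  forall (a : R) (x y : V), f (a *: x + y) = a * f x + f y.

Definition is_bilinear (R : realType) (V W : lmodType R) (b : V -> W -> R) :=
  (forall (a : R) (x y : V) (w : W), b (a *: x + y) w = a * b x w + b y w) /\
  (forall (a : R) (v : V) (x y : W), b v (a *: x + y) = a * b v x + b v y).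

Definition is_quadratic_form (R : realType) (V : lmodType R) (s : V -> R) :=
  exists b : V -> V -> R,
    is_bilinear b /\ (forall x y : V, b x y = b y x) /\ (forall v : V, s v = b v v).

Definition is_pos_def_quadratic_form (R : realType) (V : lmodType R) (s : V -> R) :=
  is_quadratic_form s /\ (forall v : V, v != 0 -> 0 < s v).

(* Write z = (v, w) and let E z be half the differential of g at z with the
   sign of its W-part reversed, so that the saddle points of g are the zeros
   of E.  With B = sigma + mu on V x W, every E z satisfies
   (E z x)^2 <= D * B x x for some D, and moving z to z - t u changes E z by
   - t L u, where L u u = B u u and, by (i), (L u x)^2 <= C * B u u * B x x.
   Choosing u along which E z nearly attains the bound D, one such step
   lowers D by a fixed factor rho < 1.  Iterating from z = 0, where (ii)
   bounds E 0, yields eps-saddle points for every eps > 0, whence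
   inf sup = sup inf; no completeness of V or W is needed.  The growth
   bounds (b) follow from (i) and (ii) through 2 x y <= x^2 + y^2. *)

From HB Require Import structures.
From mathcomp Require Import all_boot all_order all_algebra.
From mathcomp Require Import all_classical all_reals.
From mathcomp Require Import ereal.
From mathcomp Require Import ring lra.
Set Implicit Arguments. Unset Strict Implicit. Unset Printing Implicit Defensive.
Import Order.TTheory GRing.Theory Num.Theory.
Local Open Scope classical_set_scope.
Local Open Scope ring_scope.

Lemma mul2_le_add_of_sqr_le (R : realFieldType) (x a b : R) :
  0 <= a -> 0 <= b -> x ^+ 2 <= a * b -> 2 * x <= a + b.
Proof. by move=> a0 b0 xab; have := sqr_ge0 (a - b); nra. Qed.

Lemma weighted_sqr_le (R : realFieldType) (a C P Q S : R) :
  0 < C -> a * (1 + C) = 1 -> Q ^+ 2 <= C * S ->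
  ((1 - a) * P - a * Q) ^+ 2 <= (1 - a) * (P ^+ 2 + S).
Proof.
move=> C0 aC QS.
have a1 : 0 <= 1 - a by nra.
rewrite -subr_ge0 -(pmulr_rge0 _ C0).
have -> : C * ((1 - a) * (P ^+ 2 + S) - ((1 - a) * P - a * Q) ^+ 2) =
    (a * C * P + (1 - a) * Q) ^+ 2 + (1 - a) * (C * S - Q ^+ 2)
    + (C * P ^+ 2 + Q ^+ 2) * a * (1 - a * (1 + C)) by ring.
by rewrite aC subrr mulr0 addr0 addr_ge0 ?sqr_ge0 // mulr_ge0 // subr_ge0.
Qed.

Lemma quadratic_ge0_discriminant (R : realFieldType) (a b c : R) : 0 <= a ->
  (forall s, 0 <= a * s ^+ 2 + 2 * b * s + c) -> b ^+ 2 <= a * c.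
Proof.
move=> a0 nonneg; have [a_eq0|an0] := eqVneq a 0.
  have [->|bn0] := eqVneq b 0; first by rewrite expr0n a_eq0 mul0r.
  have := nonneg (- (c + 1) / (2 * b)).
  have -> : 2 * b * (- (c + 1) / (2 * b)) = - (c + 1) by field.
  rewrite a_eq0 !mul0r add0r; lra.
have := nonneg (- b / a).
have -> : a * (- b / a) ^+ 2 + 2 * b * (- b / a) + c = c - b ^+ 2 / a by field.
by rewrite subr_ge0 ler_pdivrMr ?lt_def ?an0 // mulrC.
Qed.

Lemma exprn_le_small (R : archiFieldType) (x eps : R) :
  0 <= x < 1 -> 0 < eps -> exists n, x ^+ n <= eps.
Proof.
move=> /andP[x0 x1] eps0.
have bernoulli n : x ^+ n * (1 + n%:R * (1 - x)) <= 1.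
  elim: n => [|n IHn]; first by rewrite expr0 mul0r addr0 mul1r.
  apply: le_trans IHn; rewrite exprS -mulrA mulrCA ler_wpM2l ?exprn_ge0 //.
  rewrite -natr1; have N0 : 0 <= n%:R + 1 :> R by rewrite addr_ge0.
  have := mulr_ge0 (sqr_ge0 (1 - x)) N0; nra.
have b0 : 0 < (1 - x) * eps by rewrite mulr_gt0 // subr_gt0.
have inv0 : 0 <= ((1 - x) * eps)^-1 by rewrite invr_ge0 ltW.
have := archi_boundP inv0; set n := Num.Def.archi_bound _ => nb.
exists n; have := bernoulli n; have := exprn_ge0 n x0.
rewrite -[_^-1]mul1r ltr_pdivrMr // in nb; nra.
Qed.

Lemma sqr_add_le_contraction (R : realFieldType) (a M N K P E2 : R) :
  0 < a -> a < 1 -> 0 <= K -> (1 - a ^+ 2 / 12) * P < E2 -> E2 <= P ->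
  M ^+ 2 <= (1 - a) * P * K -> N ^+ 2 <= K * (P - E2) ->
  (M + N) ^+ 2 <= (1 - a ^+ 2 / 24) * K * E2.
Proof.
move=> a0 a1 K_ge0 P_lt E_le M_le N_le.
have P_gt0 : 0 < P by nra.
(* Young's inequality with weight [a / 2]. *)
have young : a * (M + N) ^+ 2 <= (a + a ^+ 2 / 2) * M ^+ 2 + (a + 2) * N ^+ 2.
  by have := sqr_ge0 (a * M - 2 * N); nra.
have gap : K * (P - E2) <= K * (a ^+ 2 / 12 * P) by rewrite ler_wpM2l //; lra.
have coef : (a + a ^+ 2 / 2) * (1 - a) + (a + 2) * (a ^+ 2 / 12)
    <= a * (1 - a ^+ 2 / 24) * (1 - a ^+ 2 / 12).
  rewrite -subr_ge0; have -> : a * (1 - a ^+ 2 / 24) * (1 - a ^+ 2 / 12) -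
     ((a + a ^+ 2 / 2) * (1 - a) + (a + 2) * (a ^+ 2 / 12))
    = a ^+ 2 * (1 / 3 + 7 / 24 * a + a ^+ 3 / 288) by field.
  by rewrite mulr_ge0 ?sqr_ge0 //; have := exprn_ge0 3 (ltW a0); lra.
have KP := mulr_ge0 K_ge0 (ltW P_gt0).
have hM : (a + a ^+ 2 / 2) * M ^+ 2 <= (a + a ^+ 2 / 2) * ((1 - a) * P * K).
  by rewrite ler_wpM2l //; nra.
have hN : (a + 2) * N ^+ 2 <= (a + 2) * (K * (a ^+ 2 / 12 * P)).
  by rewrite ler_wpM2l ?(le_trans N_le gap) //; lra.
have total := ler_wpM2r KP coef.
have slack : 0 <= a * (1 - a ^+ 2 / 24) * K * (E2 - (1 - a ^+ 2 / 12) * P).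
  by rewrite !mulr_ge0 ?(ltW a0) ?subr_ge0 ?(ltW P_lt) //; nra.
suff : a * (M + N) ^+ 2 <= a * ((1 - a ^+ 2 / 24) * K * E2) by rewrite ler_pM2l.
lra.
Qed.

Lemma sqr_sum4_le_mul (R : realFieldType) (A1 A2 A3 A4 s1 s2 m1 m2 c : R) :
  0 <= s1 -> 0 <= s2 -> 0 <= m1 -> 0 <= m2 ->
  A1 ^+ 2 <= s1 * s2 -> A2 ^+ 2 <= c ^+ 2 * s2 * m1 -> A3 ^+ 2 <= m1 * m2 ->
  A4 ^+ 2 <= c ^+ 2 * s1 * m2 ->
  (A1 + A2 + A3 - A4) ^+ 2 <= 4 * (1 + c ^+ 2) * (s1 + m1) * (s2 + m2).
Proof.
move=> s1_ge0 s2_ge0 m1_ge0 m2_ge0 A1_le A2_le A3_le A4_le.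
have : (A1 + A2 + A3 - A4) ^+ 2 <= 4 * (A1 ^+ 2 + A2 ^+ 2 + A3 ^+ 2 + A4 ^+ 2).
  rewrite -subr_ge0.
  have -> : 4 * (A1 ^+ 2 + A2 ^+ 2 + A3 ^+ 2 + A4 ^+ 2) - (A1 + A2 + A3 - A4) ^+ 2 =
    (A1 - A2) ^+ 2 + (A1 - A3) ^+ 2 + (A1 + A4) ^+ 2 + (A2 - A3) ^+ 2 + (A2 + A4) ^+ 2
    + (A3 + A4) ^+ 2 by ring.
  by rewrite !addr_ge0 ?sqr_ge0.
have := mulr_ge0 (sqr_ge0 c) (mulr_ge0 s1_ge0 s2_ge0).
have := mulr_ge0 (sqr_ge0 c) (mulr_ge0 m1_ge0 m2_ge0).
have := mulr_ge0 s1_ge0 m2_ge0; have := mulr_ge0 m1_ge0 s2_ge0.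
lra.
Qed.

Section LinearFunctional.
Variables (R : ringType) (X : lmodType R) (e : X -> R).
Hypothesis e_lin : forall a x y, e (a *: x + y) = a * e x + e y.

Lemma linear_fun0 : e 0 = 0.
Proof.
by have := e_lin 1 0 0; rewrite scale1r addr0 mul1r -{1}[e 0]addr0 => /addrI /esym.
Qed.

Lemma linear_funZ a x : e (a *: x) = a * e x.
Proof. by rewrite -[a *: x]addr0 e_lin linear_fun0 addr0. Qed.

Lemma linear_funD x y : e (x + y) = e x + e y.
Proof. by rewrite -{1}[x]scale1r e_lin mul1r. Qed.

End LinearFunctional.

Section SymmetricBilinearForm.
Variables (R : realFieldType) (X : lmodType R) (B : X -> X -> R).
Hypothesis B_linl : forall a x y z, B (a *: x + y) z = a * B x z + B y z.
Hypothesis B_sym : forall x y, B x y = B y x.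

Lemma form0l z : B 0 z = 0.
Proof. exact: (linear_fun0 (e := B^~ z)). Qed.

Lemma form_linr a x y z : B z (a *: x + y) = a * B z x + B z y.
Proof. by rewrite B_sym B_linl (B_sym x) (B_sym y). Qed.

Lemma form_quad s x u :
  B (s *: x + u) (s *: x + u) = s ^+ 2 * B x x + 2 * s * B u x + B u u.
Proof. by rewrite B_linl !form_linr (B_sym x u); ring. Qed.

Lemma formZ s x : B (s *: x) (s *: x) = s ^+ 2 * B x x.
Proof. by rewrite -[s *: x]addr0 form_quad !form0l; ring. Qed.

Lemma formD x y : B (x + y) (x + y) = B x x + 2 * B y x + B y y.
Proof. by rewrite -[x]scale1r form_quad scale1r; ring. Qed.

Hypothesis B_psd : forall x, 0 <= B x x.

Lemma form_cauchy_schwarz x y : B x y ^+ 2 <= B x x * B y y.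
Proof.
apply: quadratic_ge0_discriminant => [|s]; first exact: B_psd.
suff -> : B x x * s ^+ 2 + 2 * B x y * s + B y y = B (s *: x + y) (s *: x + y) by [].
by rewrite form_quad (B_sym y x); ring.
Qed.

End SymmetricBilinearForm.

Section Contraction.
Variables (R : archiFieldType) (X : lmodType R) (B L : X -> X -> R) (C : R).
Hypothesis B_linl : forall a x y z, B (a *: x + y) z = a * B x z + B y z.
Hypothesis B_sym : forall x y, B x y = B y x.
Hypothesis B_psd : forall x, 0 <= B x x.
Hypothesis L_linr : forall u a x y, L u (a *: x + y) = a * L u x + L u y.
Hypothesis L_diag : forall u, L u u = B u u.
Hypothesis C_gt0 : 0 < C.
Hypothesis L_bound : forall u x, L u x ^+ 2 <= C * B u u * B x x.

Let alpha := (1 + C)^-1.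
Let rho := 1 - alpha ^+ 2 / 24.

Lemma alphaP : [/\ 0 < alpha, alpha < 1 & alpha * (1 + C) = 1].
Proof.
have C1 : 0 < 1 + C by rewrite addr_gt0.
by rewrite invr_gt0 invf_lt1 ?mulVf ?gt_eqF ?ltrDl.
Qed.

Lemma form_sub_alpha_bound u x :
  (B u x - alpha * L u x) ^+ 2 <= (1 - alpha) * B u u * B x x.
Proof.
have [_ a1 aC] := alphaP.
have sqr_le0_eq0 (y : R) : y ^+ 2 <= 0 -> y = 0.
  by move=> y0; apply/eqP; rewrite -sqrf_eq0 eq_le y0 sqr_ge0.
have [Bu0|Bu_neq0] := eqVneq (B u u) 0.
  have Bux : B u x = 0.
    by apply: sqr_le0_eq0; have := form_cauchy_schwarz B_linl B_sym B_psd u x; rewrite Bu0 mul0r.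
  have Lux : L u x = 0 by apply: sqr_le0_eq0; have := L_bound u x; rewrite Bu0 mulr0 mul0r.
  by rewrite Bux Lux Bu0 !mulr0 mul0r subrr expr0n.
pose k := B u x / B u u; pose y := x - k *: u.
have xE : x = k *: u + y by rewrite /y addrC subrK.
have Bux : B u x = k * B u u by rewrite /k mulfVK.
have Buy : B u y = 0.
  by rewrite /y -scaleNr addrC (form_linr B_linl B_sym) Bux; ring.
have Bxx : B x x = k ^+ 2 * B u u + B y y.
  by rewrite {1 2}xE (form_quad B_linl B_sym) (B_sym y u) Buy; ring.
have Lux : L u x = k * B u u + L u y by rewrite {1}xE L_linr L_diag.
have Luy : L u y ^+ 2 <= C * (B u u * B y y) by rewrite mulrA.
have := weighted_sqr_le (k * B u u) C_gt0 aC Luy.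
by rewrite Lux Bux Bxx; congr (_ <= _); ring.
Qed.

Lemma contraction_step (e : X -> R) (D : R) :
  (forall a x y, e (a *: x + y) = a * e x + e y) -> 0 <= D ->
  (forall x, e x ^+ 2 <= D * B x x) ->
  exists u t, forall x, (e x - t * L u x) ^+ 2 <= rho * D * B x x.
Proof.
move=> e_lin D_ge0 e_bound; have [a0 a1 _] := alphaP.
have [[u near_norming]|no_near_norming] :=
  pselect (exists u, (1 - alpha ^+ 2 / 12) * D * B u u < e u ^+ 2); last first.
  exists 0, 0 => x; rewrite mul0r subr0.
  have : e x ^+ 2 <= (1 - alpha ^+ 2 / 12) * D * B x x.
    by rewrite leNgt; apply/negP => ex; apply: no_near_norming; exists x.
  have := mulr_ge0 D_ge0 (B_psd x); rewrite /rho; nra.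
have eu_gt0 : 0 < e u ^+ 2.
  have a12 : 0 <= 1 - alpha ^+ 2 / 12 by nra.
  by have := mulr_ge0 (mulr_ge0 a12 D_ge0) (B_psd u); lra.
exists u, (alpha * D / e u) => x.
(* [e u * (e x - t * L u x)] is [D * (B u x - alpha * L u x)] plus
   [e u * e x - D * B u x]; the latter is small by Cauchy-Schwarz for the
   nonnegative form [D * B - e * e], since [u] nearly attains the bound [D]. *)
have Q_linl a y z w : D * B (a *: y + z) w - e (a *: y + z) * e w =
    a * (D * B y w - e y * e w) + (D * B z w - e z * e w).
  by rewrite B_linl e_lin; ring.
have Q_sym y z : D * B y z - e y * e z = D * B z y - e z * e y.
  by rewrite B_sym (mulrC (e y)).
have Q_psd y : 0 <= D * B y y - e y * e y by rewrite subr_ge0 -expr2 e_bound.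
have := form_cauchy_schwarz Q_linl Q_sym Q_psd u x; rewrite -!expr2 => near_opt.
have K_ge0 : 0 <= D * B x x by rewrite mulr_ge0.
have P_lt : (1 - alpha ^+ 2 / 12) * (D * B u u) < e u ^+ 2 by rewrite mulrA.
have M_le : (D * (B u x - alpha * L u x)) ^+ 2 <= (1 - alpha) * (D * B u u) * (D * B x x).
  have -> : (1 - alpha) * (D * B u u) * (D * B x x) =
    D ^+ 2 * ((1 - alpha) * B u u * B x x) by ring.
  by rewrite exprMn ler_wpM2l ?sqr_ge0 ?form_sub_alpha_bound.
have N_le : (e u * e x - D * B u x) ^+ 2 <= D * B x x * (D * B u u - e u ^+ 2).
  rewrite -sqrrN opprB [X in _ <= X]mulrC; apply: le_trans near_opt _.
  by rewrite ler_wpM2l ?subr_ge0 ?e_bound // lerBlDr lerDl sqr_ge0.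
rewrite -(ler_pM2l eu_gt0).
have -> : e u ^+ 2 * (e x - alpha * D / e u * L u x) ^+ 2 =
    (D * (B u x - alpha * L u x) + (e u * e x - D * B u x)) ^+ 2.
  by field; rewrite -(sqrf_eq0 (e u)) gt_eqF.
have -> : e u ^+ 2 * (rho * D * B x x) = (1 - alpha ^+ 2 / 24) * (D * B x x) * e u ^+ 2.
  by rewrite /rho; ring.
exact: sqr_add_le_contraction a0 a1 K_ge0 P_lt (e_bound u) M_le N_le.
Qed.

Lemma contraction_approx_zero (E : X -> X -> R) (z0 : X) (D0 eps : R) :
  (forall z a x y, E z (a *: x + y) = a * E z x + E z y) ->
  (forall z u t x, E (t *: u + z) x = E z x + t * L u x) ->
  0 <= D0 -> (forall x, E z0 x ^+ 2 <= D0 * B x x) -> 0 < eps ->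
  exists z, forall x, E z x ^+ 2 <= eps * B x x.
Proof.
move=> E_lin E_shift D0_ge0 E0_bound eps_gt0; have [a0 a1 _] := alphaP.
have rho_ge0 : 0 <= rho by rewrite /rho; nra.
have iterate n : exists z, forall x, E z x ^+ 2 <= rho ^+ n * D0 * B x x.
  elim: n => [|n [z Ez]]; first by exists z0 => x; rewrite expr0 mul1r.
  have Dn_ge0 : 0 <= rho ^+ n * D0 by rewrite mulr_ge0 ?exprn_ge0.
  have [u [t Ezut]] := contraction_step (E_lin z) Dn_ge0 Ez.
  by exists ((- t) *: u + z) => x; rewrite E_shift mulNr (exprS rho) -[rho * _ * D0]mulrA.
have rho_bounds : 0 <= rho < 1 by rewrite rho_ge0 /rho; nra.
have eps'_gt0 : 0 < eps / (D0 + 1) by rewrite divr_gt0 // ltr_wpDl.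
have [n rho_n] := exprn_le_small rho_bounds eps'_gt0.
have [z Ez] := iterate n; exists z => x; apply: le_trans (Ez x) _.
rewrite ler_wpM2r //; move: rho_n; rewrite ler_pdivlMr ?ltr_wpDl //.
by have := exprn_ge0 n rho_ge0; nra.
Qed.

End Contraction.

Section SaddleFunction.
Variables (R : archiFieldType) (V W : lmodType R).
Variables (bs : V -> V -> R) (bm : W -> W -> R) (p : V -> W -> R).
Variables (f : V -> R) (h : W -> R) (r c K1 K2 : R) (g : V -> W -> R).
Hypothesis bs_linl : forall a x y z, bs (a *: x + y) z = a * bs x z + bs y z.
Hypothesis bs_sym : forall x y, bs x y = bs y x.
Hypothesis bs_psd : forall x, 0 <= bs x x.
Hypothesis bm_linl : forall a x y z, bm (a *: x + y) z = a * bm x z + bm y z.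
Hypothesis bm_sym : forall x y, bm x y = bm y x.
Hypothesis bm_psd : forall x, 0 <= bm x x.
Hypothesis p_linl : forall a x y w, p (a *: x + y) w = a * p x w + p y w.
Hypothesis p_linr : forall a v x y, p v (a *: x + y) = a * p v x + p v y.
Hypothesis f_lin : forall a x y, f (a *: x + y) = a * f x + f y.
Hypothesis h_lin : forall a x y, h (a *: x + y) = a * h x + h y.
Hypothesis p_bound : forall v w, p v w ^+ 2 <= c ^+ 2 * bs v v * bm w w.
Hypotheses (K1_ge0 : 0 <= K1) (K2_ge0 : 0 <= K2).
Hypothesis f_bound : forall v, f v ^+ 2 <= K1 * bs v v.
Hypothesis h_bound : forall w, h w ^+ 2 <= K2 * bm w w.
Hypothesis gE : forall v w,
  g v w = bs v v + 2 * p v w - bm w w - 2 * f v + 2 * h w + r.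

Let p0l w : p 0 w = 0. Proof. exact: (linear_fun0 (e := p^~ w)). Qed.
Let p0r v : p v 0 = 0. Proof. exact: (linear_fun0 (e := p v)). Qed.
Let pDl x y w : p (x + y) w = p x w + p y w.
Proof. exact: (linear_funD (e := p^~ w)). Qed.
Let pDr v x y : p v (x + y) = p v x + p v y.
Proof. exact: (linear_funD (e := p v)). Qed.

Let B (z x : V * W) := bs z.1 x.1 + bm z.2 x.2.
Let L (u x : V * W) := bs u.1 x.1 + p x.1 u.2 + bm u.2 x.2 - p u.1 x.2.
Let E (z x : V * W) := bs z.1 x.1 + p x.1 z.2 - f x.1 + bm z.2 x.2 - p z.1 x.2 - h x.2.

Lemma L_bound u x : L u x ^+ 2 <= 4 * (1 + c ^+ 2) * B u u * B x x.
Proof.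
case: u x => [u1 u2] [x1 x2]; rewrite /L /B /=.
by apply: sqr_sum4_le_mul; rewrite ?bs_psd ?bm_psd ?p_bound
  ?(form_cauchy_schwarz bs_linl) ?(form_cauchy_schwarz bm_linl).
Qed.

Lemma E0_bound x : E 0 x ^+ 2 <= 2 * (K1 + K2) * B x x.
Proof.
case: x => x1 x2; rewrite /E /B /= !form0l // p0l p0r.
have := f_bound x1; have := h_bound x2; have := sqr_ge0 (f x1 - h x2).
have := mulr_ge0 K1_ge0 (bm_psd x2); have := mulr_ge0 K2_ge0 (bs_psd x1).
nra.
Qed.

Lemma small_gradient eps : 0 < eps -> exists z, forall x, E z x ^+ 2 <= eps * B x x.
Proof.
have B_linl a x y z : B (a *: x + y) z = a * B x z + B y z.
  by rewrite /B /= bs_linl bm_linl; ring.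
have B_sym x y : B x y = B y x by rewrite /B bs_sym bm_sym.
have B_psd x : 0 <= B x x by rewrite addr_ge0.
have L_linr u a x y : L u (a *: x + y) = a * L u x + L u y.
  by rewrite /L /= !(form_linr bs_linl, form_linr bm_linl) // p_linl p_linr; ring.
have L_diag u : L u u = B u u by rewrite /L /B; ring.
have C_gt0 : 0 < 4 * (1 + c ^+ 2) by have := sqr_ge0 c; lra.
have E_lin z a x y : E z (a *: x + y) = a * E z x + E z y.
  by rewrite /E /= !(form_linr bs_linl, form_linr bm_linl) // p_linl p_linr f_lin h_lin; ring.
have E_shift z u t x : E (t *: u + z) x = E z x + t * L u x.
  by rewrite /E /L /= bs_linl bm_linl p_linl p_linr; ring.
have D0_ge0 : 0 <= 2 * (K1 + K2) by rewrite mulr_ge0 ?addr_ge0.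
exact: (contraction_approx_zero B_linl B_sym B_psd L_linr L_diag C_gt0 L_bound
  E_lin E_shift D0_ge0 E0_bound).
Qed.

Lemma g_shiftl v w d : g (d + v) w = g v w + bs d d + 2 * E (v, w) (d, 0).
Proof.
rewrite !gE /E /= (formD bs_linl bs_sym) pDl (linear_funD f_lin) p0r.
by rewrite bm_sym (form0l bm_linl) (linear_fun0 h_lin); ring.
Qed.

Lemma g_shiftr v w d : g v (d + w) = g v w - bm d d - 2 * E (v, w) (0, d).
Proof.
rewrite !gE /E /= (formD bm_linl bm_sym) pDr (linear_funD h_lin) p0l.
by rewrite bs_sym (form0l bs_linl) (linear_fun0 f_lin); ring.
Qed.

Lemma approx_saddle_point eps : 0 < eps -> exists v w,
  (forall v', g v w - eps <= g v' w) /\ (forall w', g v w' <= g v w + eps).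
Proof.
move=> eps_gt0; have [[v w] Ez] := small_gradient eps_gt0.
exists v, w; split => [v'|w'].
- have -> : v' = (v' - v) + v by rewrite subrK.
  set d := v' - v; rewrite g_shiftl.
  have := Ez (d, 0); rewrite /B /= (form0l bm_linl) addr0 => Ed.
  have := mul2_le_add_of_sqr_le (x := - E (v, w) (d, 0)) (ltW eps_gt0) (bs_psd d).
  by rewrite sqrrN => /(_ Ed); lra.
- have -> : w' = (w' - w) + w by rewrite subrK.
  set d := w' - w; rewrite g_shiftr.
  have := Ez (0, d); rewrite /B /= (form0l bs_linl) add0r => Ed.
  have := mul2_le_add_of_sqr_le (x := - E (v, w) (0, d)) (ltW eps_gt0) (bm_psd d).
  by rewrite sqrrN => /(_ Ed); lra.
Qed.

Lemma saddle_fun_growth : exists2 c1, 0 <= c1 &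
  (forall v w, - c1 * (1 + bm w w) <= g v w) /\
  (forall v w, g v w <= c1 * (1 + bs v v)).
Proof.
have c2_ge0 := sqr_ge0 c; have r_ge0 := normr_ge0 r.
have /andP[rl ru] : - `|r| <= r <= `|r| by rewrite -ler_norml.
exists (2 + 2 * c ^+ 2 + 2 * K1 + 2 * K2 + `|r|); first by have := K1_ge0; have := K2_ge0; lra.
have K_ge0 : 0 <= 2 * K1 + 2 * K2 + `|r| by have := K1_ge0; have := K2_ge0; lra.
split=> v w; rewrite gE; have := bs_psd v; have := bm_psd w.
- have pvw : 2 * - p v w <= bs v v / 2 + 2 * c ^+ 2 * bm w w.
    apply: mul2_le_add_of_sqr_le; rewrite ?sqrrN ?divr_ge0 ?bs_psd //.
      by rewrite mulr_ge0 ?bm_psd // mulr_ge0 // sqr_ge0.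
    by have := p_bound v w; lra.
  have fv : 2 * f v <= bs v v / 2 + 2 * K1.
    apply: mul2_le_add_of_sqr_le; rewrite ?mulr_ge0 ?divr_ge0 ?bs_psd //.
    by have := f_bound v; lra.
  have hw : 2 * - h w <= bm w w + K2.
    by apply: mul2_le_add_of_sqr_le; rewrite ?sqrrN ?bm_psd // mulrC h_bound.
  have := mulr_ge0 (bm_psd w) K_ge0; have := K2_ge0; lra.
- have pvw : 2 * p v w <= bm w w / 2 + 2 * c ^+ 2 * bs v v.
    apply: mul2_le_add_of_sqr_le; rewrite ?divr_ge0 ?bm_psd //.
      by rewrite mulr_ge0 ?bs_psd // mulr_ge0 // sqr_ge0.
    by have := p_bound v w; lra.
  have fv : 2 * - f v <= bs v v + K1.
    by apply: mul2_le_add_of_sqr_le; rewrite ?sqrrN ?bs_psd // mulrC f_bound.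
  have hw : 2 * h w <= bm w w / 2 + 2 * K2.
    apply: mul2_le_add_of_sqr_le; rewrite ?mulr_ge0 ?divr_ge0 ?bm_psd //.
    by have := h_bound w; lra.
  have := mulr_ge0 (bs_psd v) K_ge0; have := K1_ge0; lra.
Qed.

End SaddleFunction.

Lemma linear_sqr_le_of_quadratic_lb (R : realFieldType) (X : lmodType R) (q e : X -> R) :
  (forall s x, q (s *: x) = s ^+ 2 * q x) -> (forall s x, e (s *: x) = s * e x) ->
  (forall x, 0 <= q x) -> (exists M, forall x, M <= q x - 2 * e x) ->
  exists2 K, 0 <= K & forall x, e x ^+ 2 <= K * q x.
Proof.
move=> qZ eZ q_ge0 [M qe_lb]; exists (- M).
  by have := qe_lb 0; rewrite -(scale0r (0 : X)) qZ eZ; lra.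
move=> x; rewrite mulrC -sqrrN.
apply: quadratic_ge0_discriminant => [|s]; first exact: q_ge0.
by have := qe_lb (s *: x); rewrite qZ eZ; lra.
Qed.

Lemma pos_def_quadratic_formP (R : realType) (V : lmodType R) (s : V -> R) :
  is_pos_def_quadratic_form s -> exists b : V -> V -> R,
  [/\ forall a x y z, b (a *: x + y) z = a * b x z + b y z,
      forall x y, b x y = b y x, forall v, s v = b v v & forall v, 0 <= b v v].
Proof.
case=> -[b [[b_linl _] [b_sym sE]]] s_pos; exists b; split=> // v.
have [->|/s_pos/ltW] := eqVneq v 0; last by rewrite sE.
by rewrite (form0l b_linl).
Qed.

Section ExtendedRealMinimax.
Variables (R : realType) (T U : Type).

Lemma ereal_inf_gtNy_lbound (F : T -> R) :
  (-oo < ereal_inf [set (F x)%:E | x in [set: T]])%E -> exists M, forall x, M <= F x.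
Proof.
have lb x : (ereal_inf [set (F x)%:E | x in [set: T]] <= (F x)%:E)%E.
  by apply: ereal_inf_lbound; exists x.
move: lb; case: (ereal_inf _) => [M| |] lb // _.
  by exists M => x; rewrite -lee_fin lb.
by exists 0 => x; have := lb x.
Qed.

Lemma ereal_sup_ltey_ubound (F : T -> R) :
  (ereal_sup [set (F x)%:E | x in [set: T]] < +oo)%E -> exists M, forall x, F x <= M.
Proof.
have ub x : ((F x)%:E <= ereal_sup [set (F x)%:E | x in [set: T]])%E.
  by apply: ereal_sup_ubound; exists x.
move: ub; case: (ereal_sup _) => [M| |] ub // _.
  by exists M => x; rewrite -lee_fin ub.
by exists 0 => x; have := ub x.
Qed.

Variable G : T -> U -> R.

Lemma ereal_sup_inf_le_inf_sup :
  (ereal_sup [set ereal_inf [set (G v w)%:E | v in [set: T]] | w in [set: U]] <=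
   ereal_inf [set ereal_sup [set (G v w)%:E | w in [set: U]] | v in [set: T]])%E.
Proof.
apply: ge_ereal_sup => _ [w _ <-]; apply: le_ereal_inf_tmp => _ [v _ <-].
apply: (@le_trans _ _ (G v w)%:E); first by apply: ereal_inf_lbound; exists v.
by apply: ereal_sup_ubound; exists w.
Qed.

Lemma minimax_of_approx_saddle :
  (forall eps, 0 < eps -> exists v w,
    (forall v', G v w - eps <= G v' w) /\ (forall w', G v w' <= G v w + eps)) ->
  ereal_inf [set ereal_sup [set (G v w)%:E | w in [set: U]] | v in [set: T]] =
  ereal_sup [set ereal_inf [set (G v w)%:E | v in [set: T]] | w in [set: U]].
Proof.
move=> saddle; apply/eqP; rewrite eq_le ereal_sup_inf_le_inf_sup andbT.
apply/lee_addgt0Pr => e e_gt0.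
have [v [w [v_min w_max]]] := saddle (e / 2) (divr_gt0 e_gt0 (ltr0Sn _ 1)).
apply: (@le_trans _ _ (G v w + e / 2)%:E).
  apply: (@le_trans _ _ (ereal_sup [set (G v w')%:E | w' in [set: U]])).
    by apply: ereal_inf_lbound; exists v.
  by apply: ge_ereal_sup => _ [w' _ <-]; rewrite lee_fin w_max.
rewrite (_ : G v w + e / 2 = G v w - e / 2 + e); last by field.
rewrite EFinD leeD2r //.
apply: (@le_trans _ _ (ereal_inf [set (G v' w)%:E | v' in [set: T]])).
  by apply: le_ereal_inf_tmp => _ [v' _ <-]; rewrite lee_fin v_min.
by apply: ereal_sup_ubound; exists w.
Qed.

End ExtendedRealMinimax.

Theorem theorem3p2 (R : realType) (V W : lmodType R)
  (sigma : V -> R) (mu : W -> R) (p : V -> W -> R) (f : V -> R) (h : W -> R)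
  (r : R) (g : V -> W -> R)
  (Hg : forall v w, g v w = sigma v + 2 * p v w - mu w - 2 * f v + 2 * h w + r)
  (Hsigma : is_pos_def_quadratic_form sigma)
  (Hmu : is_pos_def_quadratic_form mu)
  (Hp : is_bilinear p)
  (Hf : is_linear_functional f)
  (Hh : is_linear_functional h)
  (Hi : exists c : R, 0 <= c /\
          forall v w, `|p v w| ^+ 2 <= c ^+ 2 * sigma v * mu w)
  (Hii1 : (-oo < ereal_inf [set (g v 0)%:E | v in [set: V]])%E)
  (Hii2 : (ereal_sup [set (g 0 w)%:E | w in [set: W]] < +oo)%E) :
  ereal_inf [set ereal_sup [set (g v w)%:E | w in [set: W]] | v in [set: V]] =
  ereal_sup [set ereal_inf [set (g v w)%:E | v in [set: V]] | w in [set: W]]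
  /\
  exists c1 : R, 0 <= c1 /\
    (forall w : W, ((- c1 * (1 + mu w))%:E <= ereal_inf [set (g v w)%:E | v in [set: V]])%E) /\
    (forall v : V, (ereal_sup [set (g v w)%:E | w in [set: W]] <= (c1 * (1 + sigma v))%:E)%E).
Proof.
have [bs [bs_linl bs_sym sigmaE bs_psd]] := pos_def_quadratic_formP Hsigma.
have [bm [bm_linl bm_sym muE bm_psd]] := pos_def_quadratic_formP Hmu.
have [[p_linl p_linr] [c [_ p_norm_bound]]] := (Hp, Hi).
have gE v w : g v w = bs v v + 2 * p v w - bm w w - 2 * f v + 2 * h w + r.
  by rewrite Hg sigmaE muE.
have p_bound v w : p v w ^+ 2 <= c ^+ 2 * bs v v * bm w w.
  by rewrite -sigmaE -muE -real_normK ?num_real.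
have [K1 K1_ge0 f_bound] : exists2 K, 0 <= K & forall v, f v ^+ 2 <= K * bs v v.
  apply: (linear_sqr_le_of_quadratic_lb (formZ bs_linl bs_sym) (linear_funZ Hf) bs_psd).
  have [M M_le] := ereal_inf_gtNy_lbound Hii1; exists (M - r) => v.
  have bm00 : bm 0 0 = 0 := form0l bm_linl 0.
  have h0 : h 0 = 0 := linear_fun0 Hh.
  have pv0 : p v 0 = 0 := linear_fun0 (p_linr^~ v).
  by have := M_le v; rewrite gE bm00 h0 pv0; lra.
have [K2 K2_ge0 h_bound] : exists2 K, 0 <= K & forall w, h w ^+ 2 <= K * bm w w.
  apply: (linear_sqr_le_of_quadratic_lb (formZ bm_linl bm_sym) (linear_funZ Hh) bm_psd).
  have [M M_le] := ereal_sup_ltey_ubound Hii2; exists (r - M) => w.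
  have bs00 : bs 0 0 = 0 := form0l bs_linl 0.
  have f0 : f 0 = 0 := linear_fun0 Hf.
  have p0w : p 0 w = 0 := linear_fun0 (fun a x y => p_linl a x y w).
  by have := M_le w; rewrite gE bs00 f0 p0w; lra.
split.
  apply: minimax_of_approx_saddle.
  exact: (approx_saddle_point bs_linl bs_sym bs_psd bm_linl bm_sym bm_psd p_linl p_linr
    Hf Hh p_bound K1_ge0 K2_ge0 f_bound h_bound gE).
have [c1 c1_ge0 [g_lb g_ub]] :=
  saddle_fun_growth bs_psd bm_psd p_bound K1_ge0 K2_ge0 f_bound h_bound gE.
exists c1; split=> //; split.
- by move=> w; apply: le_ereal_inf_tmp => _ [v _ <-]; rewrite lee_fin muE g_lb.
- by move=> v; apply: ge_ereal_sup => _ [w _ <-]; rewrite lee_fin sigmaE g_ub.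
Qed.
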